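(* Let $G$ be a probability distribution on $\mathbb{R}^d$, let $w\ge 1$ and $T\ge 1$ be integers, set $\psi = 2^w$ and $L = Tw$. For $t=1,\dots,T$, let $\mathcal{D}^t=(\mathbf{s}^t_1,\dots,\mathbf{s}^t_\psi)$ be drawn i.i.d. from $G$, independently across $t$. For $\mathbf{x}\in\mathbb{R}^d$ define the hash functions $h^t_i(\mathbf{x}) = 1$ if $\mathbf{s}^t_i$ is the nearest point of $\mathcal{D}^t$ to $\mathbf{x}$ in Euclidean distance and $h^t_i(\mathbf{x})=0$ otherwise, where ties are broken by assigning $\mathbf{x}$ to one of the nearest points chosen uniformly at random (independently of everything else), so exactly one $h^t_i(\mathbf{x})$ equals $1$; let $i_t(\mathbf{x})$ denote that index. Define the encoded bits $$e^t_j(\mathbf{x}) = \left\lfloor \frac{i_t(\mathbf{x})}{2^{j-1}} \right\rfloor \bmod 2, \qquad j=1,\dots,w,$$ the $w$-bit vector $b^t(\mathbf{x}) = [e^t_1(\mathbf{x}),\dots,e^t_w(\mathbf{x})]$, and the $L$-bit code $\mathcal{B}(\mathbf{x}) = [b^1(\mathbf{x}),\dots,b^T(\mathbf{x})]$. Then for every fixed $\mathbf{x}\in\mathbb{R}^d$, the $L$ bits of $\mathcal{B}(\mathbf{x})$, viewed as random variables over the draws of $\mathcal{D}^1,\dots,\mathcal{D}^T$ (and tie-breaking), are mutually independent: for all values $v_1,\dots,v_L\in\{0,1\}$, the probability that the bits equal $v_1,\dots,v_L$ equals the product of the individual probabilities that each bit takes its value.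
   Context: This is the Voronoi Diagram Encoded Hashing (VDeH) scheme: each of the $T=L/w$ independently sampled Voronoi diagrams with $\psi=2^w$ cells is turned into $w$ bits by binary-encoding the index of the cell containing $\mathbf{x}$, and the $T$ resulting $w$-bit blocks are concatenated. *)

From HB Require Import structures.
From mathcomp Require Import all_boot all_order all_algebra all_fingroup.
From mathcomp Require Import all_classical all_reals all_analysis.

Set Implicit Arguments.
Unset Strict Implicit.
Unset Printing Implicit Defensive.

Import Order.TTheory GRing.Theory Num.Theory.
Local Open Scope classical_set_scope.
Local Open Scope ring_scope.

(* Points of R^d are represented as d.-tuple R, which carries the product
   (= Borel) sigma-algebra from MathComp-Analysis. *)

Definition eucl_dist (R : realType) (d : nat) (x y : d.-tuple R) : R :=
  Num.sqrt (\sum_(k < d) (tnth x k - tnth y k) ^+ 2).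

Definition mutually_independent (R : realType) (dO : measure_display)
    (Omega : measurableType dO) (P : probability Omega R)
    (K : finType) (E : K -> set (set Omega)) : Prop :=
  forall (J : {set K}) (A : K -> set Omega),
    (forall k, k \in J -> E k (A k)) ->
    P (\bigcap_(k in [set k | k \in J]) A k) = (\prod_(k in J) P (A k))%E.

Definition nearest_set (R : realType) (d psi : nat) (x : d.-tuple R)
    (D : 'I_psi -> d.-tuple R) : {set 'I_psi} :=
  [set i | [forall k, eucl_dist x (D i) <= eucl_dist x (D k)]].

(* Uniform random tie-breaking is implemented by a uniformly random priority
   permutation sigma (independent of everything else): among the nearest
   points, the one of smallest priority is chosen.  Conditionally on the
   samples, this choice is uniform over the set of nearest points.
   The result is the paper's 1-based index i_t(x) in {1,...,psi}
   (0 is an unreachable default, the nearest set being nonempty). *)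
Definition chosen_index (R : realType) (d psi : nat) (x : d.-tuple R)
    (D : 'I_psi -> d.-tuple R) (sigma : {perm 'I_psi}) : nat :=
  match [pick i in nearest_set x D |
           [forall k in nearest_set x D, (sigma i <= sigma k)%N]] with
  | Some i => (val i).+1
  | None => 0%N
  end.

Definition enc_bit (i j : nat) : bool := odd (i %/ 2 ^ j.-1).

(* The L = T*w bit code B(x) = [b^1(x), ..., b^T(x)], b^t = [e^t_1, ..., e^t_w]:
   the (0-based) position l corresponds to block t = l / w (0-based) and bit
   j = (l mod w) + 1. *)
Definition code_bit (R : realType) (d w T : nat) (x : d.-tuple R)
    (s : 'I_T -> 'I_(2 ^ w) -> d.-tuple R) (sigma : 'I_T -> {perm 'I_(2 ^ w)})
    (l : 'I_(T * w)) : bool :=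
  match insub (l %/ w)%N with
  | Some t => enc_bit (chosen_index x (s t) (sigma t)) (l %% w).+1
  | None => false
  end.

From HB Require Import structures.
From mathcomp Require Import all_boot all_order all_algebra all_fingroup.
From mathcomp Require Import all_classical all_reals all_analysis.
From mathcomp Require Import zify.

(* For each block t, the chosen cell index is a function of the distances from
   x to the sample points and of the tie-breaking priority sigma t.  Applying a
   permutation pi t to the labels of the sample points (and composing sigma t
   with it) does not change the joint law of these independent ingredients, but
   permutes the chosen index by pi t.  Hence the T-tuple of chosen indices is
   uniformly distributed on 'I_(2^w)^T.  Binary encoding is a bijection onto
   {0,1}^(T*w), so the code B(x) is uniform on {0,1}^(T*w), and the bits of a
   uniform random word are independent, each being fair. *)

Set Implicit Arguments.
Unset Strict Implicit.
Unset Printing Implicit Defensive.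

Import Order.TTheory GRing.Theory Num.Theory.
Local Open Scope ring_scope.

Section priority_choice.
Variable n : nat.

Definition prio_min (S : {set 'I_n}) (sg : {perm 'I_n}) : option 'I_n :=
  [pick i in S | [forall k in S, (sg i <= sg k)%N]].

Lemma prio_min_unique (S : {set 'I_n}) (sg : {perm 'I_n}) i j :
  i \in S -> [forall k in S, (sg i <= sg k)%N] ->
  j \in S -> [forall k in S, (sg j <= sg k)%N] -> i = j.
Proof.
move=> iS /forall_inP imin jS /forall_inP jmin; apply: (perm_inj (s := sg)).
by apply: val_inj; apply/eqP; rewrite eqn_leq imin // jmin.
Qed.

Lemma prio_min_relabel (S : {set 'I_n}) (sg p : {perm 'I_n}) :
  prio_min [set i | p i \in S] (p * sg)%g = omap (p^-1)%g (prio_min S sg).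
Proof.
have minE i : [forall k in [set i | p i \in S], ((p * sg)%g i <= (p * sg)%g k)%N] =
              [forall k in S, (sg (p i) <= sg k)%N].
  apply/forall_inP/forall_inP => [imin k kS|imin k]; last first.
    by rewrite inE !permM; apply: imin.
  by have := imin (p^-1 k)%g; rewrite !permM permKV; apply; rewrite inE permKV.
rewrite /prio_min; case: pickP => [i /andP[iS imin]|none].
  rewrite inE in iS; rewrite minE in imin.
  case: pickP => [j /andP[jS jmin]|/(_ (p i))] /=; last by rewrite iS imin.
  by congr Some; apply: (perm_inj (s := p)); rewrite permKV (prio_min_unique iS imin jS jmin).
case: pickP => [j /andP[jS jmin]|//]; move: (none (p^-1 j)%g).
by rewrite inE permKV jS minE permKV jmin.
Qed.

Lemma prio_min_some (S : {set 'I_n}) (sg : {perm 'I_n}) :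
  (0 < #|S|)%N -> exists i, prio_min S sg = Some i.
Proof.
case/card_gt0P => i0 i0S; rewrite /prio_min; case: pickP => [i _|none]; first by exists i.
case: (arg_minnP (fun k => sg k) i0S) => i iS imin.
have imin' : [forall k in S, (sg i <= sg k)%N] by apply/forall_inP.
by move: (none i); rewrite /= (iS : i \in S) imin'.
Qed.

End priority_choice.

Lemma card_minimizers_gt0 (R : realType) n (f : 'I_n -> R) : (0 < n)%N ->
  (0 < #|[set i | [forall k, (f i <= f k)%R]]|)%N.
Proof.
move=> n_gt0; apply/card_gt0P.
case: (@arg_minP _ _ _ (Ordinal n_gt0) xpredT f isT) => i _ imin.
by exists i; rewrite inE; apply/forallP => k; apply: imin.
Qed.

Lemma card_bit_fixed m (l : 'I_m) (b : bool) :
  (2 * #|[set f : {ffun 'I_m -> bool} | f l == b]| = 2 ^ m)%N.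
Proof.
pose flip (f : {ffun 'I_m -> bool}) : {ffun 'I_m -> bool} :=
  [ffun k => if k == l then ~~ f k else f k].
have flipK : involutive flip.
  by move=> f; apply/ffunP => k; rewrite !ffunE; case: eqP; rewrite ?negbK.
have card_flip : #|[set f : {ffun 'I_m -> bool} | f l == b]| =
                 #|[set f : {ffun 'I_m -> bool} | f l == ~~ b]|.
  rewrite -(card_preimset _ (inv_inj flipK)); apply: eq_card => f.
  by rewrite !inE ffunE eqxx; case: (f l); case: b.
have := cardsC [set f : {ffun 'I_m -> bool} | f l == b].
rewrite card_ffun card_bool card_ord mul2n -addnn {2}card_flip => <-.
rewrite addnC; congr (_ + _); apply: eq_card => f.
by rewrite !inE; case: (f l); case: (b).
Qed.

Section binary_code.
Local Open Scope nat_scope.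

Lemma modn_exp2S a m : a %% 2 ^ m.+1 = odd (a %/ 2 ^ m) * 2 ^ m + a %% 2 ^ m.
Proof.
rewrite {1}(divn_eq (a %% 2 ^ m.+1) (2 ^ m)) expnS -modn_divl modn2.
by congr (_ + _); rewrite modn_dvdm // dvdn_mull.
Qed.

Lemma enc_bit_inj w a b : 0 < a <= 2 ^ w -> 0 < b <= 2 ^ w ->
  (forall j, j < w -> enc_bit a j.+1 = enc_bit b j.+1) -> a = b.
Proof.
move=> /andP[a_gt0 a_le] /andP[b_gt0 b_le] ab_bits.
have ab_mod m : m <= w -> a %% 2 ^ m = b %% 2 ^ m.
  elim: m => [|m IHm] mw; first by rewrite expn0 !modn1.
  by rewrite !modn_exp2S IHm ?(ltnW mw) //; have := ab_bits m mw; rewrite /enc_bit /= => ->.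
(* 2 ^ w itself is congruent to 0, whence the range 0 < a <= 2 ^ w *)
have := ab_mod w (leqnn w).
have [a_lt|->] : a < 2 ^ w \/ a = 2 ^ w by lia.
all: have [b_lt|->] : b < 2 ^ w \/ b = 2 ^ w by lia.
- by rewrite !modn_small.
- by rewrite modnn modn_small // => a0; move: a_gt0; rewrite a0.
- by rewrite modnn modn_small // => b0; move: b_gt0; rewrite -b0.
- by [].
Qed.

(* Indices are encoded 1-based, as chosen_index returns them. *)
Definition block_code w T (i : {ffun 'I_T -> 'I_(2 ^ w)}) : {ffun 'I_(T * w) -> bool} :=
  [ffun l : 'I_(T * w) =>
     if insub (l %/ w) is Some t then enc_bit (i t).+1 (l %% w).+1 else false].

Lemma block_code_inj w T : 0 < w -> injective (@block_code w T).
Proof.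
move=> w_gt0 i i' ii'; apply/ffunP => t; apply: val_inj; apply: succn_inj.
apply: (@enc_bit_inj w); rewrite ?ltn_ord // => j jw.
have lT : t * w + j < T * w by have := ltn_ord t; nia.
have := congr1 (fun f : {ffun _ -> bool} => f (Ordinal lT)) ii'; rewrite !ffunE /=.
by rewrite divnMDl // divn_small // addn0 modnMDl modn_small // valK.
Qed.

Lemma block_code_bij w T : 0 < w -> bijective (@block_code w T).
Proof.
move=> w_gt0; apply: inj_card_bij (block_code_inj w_gt0) _.
by rewrite !card_ffun !card_ord card_bool -expnM mulnC.
Qed.

End binary_code.

Local Open Scope classical_set_scope.

Definition fvec (K : finType) (R : realType) := K -> R.
HB.instance Definition _ K R := gen_eqMixin (fvec K R).
HB.instance Definition _ K R := gen_choiceMixin (fvec K R).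
HB.instance Definition _ K R := isPointed.Build (fvec K R) (fun _ => 0%R).

Section real_vector_space.
Variables (R : realType) (K : finType).

Definition boxes : set (set (fvec K R)) :=
  [set [set y | forall k, A k (y k)] |
     A in [set A : K -> set R | forall k, measurable (A k)]].

Definition rvec := g_sigma_algebraType boxes.

Lemma boxes_setI_closed : setI_closed boxes.
Proof.
move=> _ _ [A mA <-] [B mB <-]; exists (fun k => A k `&` B k).
  by move=> k; apply: measurableI.
by apply/seteqP; split=> y /=; [move=> AB; split=> k; case: (AB k)|
  move=> [Ay By] k; split].
Qed.

Lemma measurable_coord (k : K) : measurable_fun [set: rvec] (fun y : rvec => y k).
Proof.
move=> _ A mA; rewrite setTI; apply: sub_sigma_algebra.
exists (fun k' => if k' == k then A else setT); first by move=> k'; case: eqP.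
apply/seteqP; split=> y /=; first by move/(_ k); rewrite eqxx.
by move=> Ay k'; case: eqP => // ->.
Qed.

Lemma measurable_coord_le (u v : K) : measurable [set y : rvec | y u <= y v].
Proof.
have /(_ measurableT [set true] I) :=
  measurable_realfun.measurable_fun_ler (measurable_coord u) (measurable_coord v).
by rewrite setTI.
Qed.

Lemma measurable_coord_eq (u : K) (r : R) : measurable [set y : rvec | y u = r].
Proof. by have := measurable_coord u measurableT (measurable_set1 r); rewrite setTI. Qed.

End real_vector_space.

(* S is the finite union of the atoms (Boolean profiles of the sets atom a) it meets. *)
Lemma measurable_of_atoms d (T : measurableType d) (I : finType)
    (atom : I -> set T) (S : set T) :
  (forall a, measurable (atom a)) ->
  (forall y y', (forall a, atom a y <-> atom a y') -> S y -> S y') ->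
  measurable S.
Proof.
move=> matom Sinv.
pose profile (b : {ffun I -> bool}) : set T :=
  \big[setI/setT]_a (if b a then atom a else ~` atom a).
have profileP b y : profile b y <-> forall a, atom a y <-> b a.
  rewrite /profile -bigcap_seq; split=> [Py a|Py a _ /=].
    by have := Py a (mem_index_enum a); case: (b a) => Pa; split=> // /(_ Pa).
  by case: (b a) (Py a) => -[Py1 Py2]; [apply: Py2|move=> /Py1].
pose ffun_of y : {ffun I -> bool} := [ffun a => `[< atom a y >]].
have profile_of y : profile (ffun_of y) y.
  by apply/profileP => a; rewrite ffunE; split=> /asboolP.
have -> : S = \big[setU/set0]_(b | `[< exists2 y, S y & profile b y >]) profile b.
  apply/seteqP; split=> y; rewrite -bigcup_seq_cond.
    move=> Sy; exists (ffun_of y) => //.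
    by apply/andP; split; [exact: mem_index_enum|apply/asboolP; exists y].
  move=> [b /andP[_ /asboolP[y0 Sy0 /profileP Py0]] /profileP Py].
  by apply: (Sinv y0) => // a; rewrite Py0 Py.
apply: bigsetU_measurable => b _; apply: bigsetI_measurable => a _.
by case: (b a); [exact: matom|exact: measurableC].
Qed.

Section joint_law.
Variables (R : realType) (K : finType) (dO : measure_display)
  (Omega : measurableType dO) (P : probability Omega R).

Definition joint (X : K -> Omega -> R) (om : Omega) : rvec R K := fun k => X k om.

Definition indep_components (X : K -> Omega -> R) :=
  forall A : K -> set R, (forall k, measurable (A k)) ->
    P (\big[setI/setT]_k (X k @^-1` A k)) = (\prod_k P (X k @^-1` A k))%E.

Lemma preimage_joint_box (X : K -> Omega -> R) (A : K -> set R) :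
  joint X @^-1` [set y | forall k, A k (y k)] = \big[setI/setT]_k (X k @^-1` A k).
Proof.
rewrite -bigcap_seq; apply/seteqP; split=> om /=; first by move=> XA k _.
by move=> XA k; apply: XA (mem_index_enum k).
Qed.

Lemma measurable_joint (X : K -> Omega -> R) :
  (forall k, measurable_fun setT (X k)) -> measurable_fun setT (joint X).
Proof.
move=> mX; apply: (@measurability _ _ Omega (rvec R K) setT (joint X) (@boxes R K)) => //.
move=> _ [_ [A mA <-] <-]; rewrite setTI preimage_joint_box.
apply: bigsetI_measurable => k _.
by have := mX k measurableT (A k) (mA k); rewrite setTI.
Qed.

(* Both laws agree on boxes by the product formula, and boxes form a
   pi-system generating the sigma-algebra. *)
Lemma joint_law_eq (X Y : K -> Omega -> R) :
  (forall k, measurable_fun setT (X k)) ->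
  (forall k, measurable_fun setT (Y k)) ->
  indep_components X -> indep_components Y ->
  (forall k A, measurable A -> P (X k @^-1` A) = P (Y k @^-1` A)) ->
  forall B : set (rvec R K), measurable B ->
    P (joint X @^-1` B) = P (joint Y @^-1` B).
Proof.
move=> mX mY iX iY XY.
have mpre Z : (forall k, measurable_fun setT (Z k)) ->
    forall B, measurable B -> measurable (joint Z @^-1` B).
  by move=> mZ B mB; have := measurable_joint mZ measurableT mB; rewrite setTI.
have preimage_trivIset Z (F : (set (rvec R K))^nat) : trivIset setT F ->
    trivIset setT (fun n => joint Z @^-1` F n).
  move=> tF; apply/trivIsetP => i j _ _ ij; rewrite -preimage_setI.
  by move/trivIsetP: tF => /(_ i j I I ij) ->; rewrite preimage_set0.
apply: (@dynkin_induction _ (rvec R K) (@boxes R K)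
  (fun B => P (joint X @^-1` B) = P (joint Y @^-1` B))) => //.
- exact: boxes_setI_closed.
- move=> _ [A mA <-]; rewrite !preimage_joint_box iX // iY //.
  by apply: eq_bigr => k _; apply: XY.
- move=> S mS PS; rewrite -!preimage_setC !probability_setC ?PS //; exact: mpre.
- move=> F mF tF PF; rewrite !preimage_bigcup !measure_bigcup //.
  + by apply: eq_eseriesr => n _; apply: PF.
  + by move=> n _; apply: mpre.
  + exact: preimage_trivIset.
  + by move=> n _; apply: mpre.
  + exact: preimage_trivIset.
Qed.

End joint_law.

Section finite_valued.
Variables (dO : measure_display) (Omega : measurableType dO) (U : finType).
Variables (Z : Omega -> U) (mZ : forall u, measurable (Z @^-1` [set u])).

Lemma preimage_bigcup_fibres (B : set U) :
  Z @^-1` B = \bigcup_(u in B) Z @^-1` [set u].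
Proof. by apply/seteqP; split=> [om Bom|om [u Bu /= ->]]; first exists (Z om). Qed.

Lemma measurable_preimage_fin (B : set U) : measurable (Z @^-1` B).
Proof.
by rewrite preimage_bigcup_fibres; apply: fin_bigcup_measurable. Qed.

Lemma measure_preimage_fin (R : realType) (mu : {measure set Omega -> \bar R})
    (B : set U) :
  mu (Z @^-1` B) = (\sum_(u | `[< B u >]) mu (Z @^-1` [set u]))%E.
Proof.
have fibres_disj : trivIset B (fun u => Z @^-1` [set u]).
  apply/trivIsetP => u u' _ _ uu'; apply/seteqP; split=> // om [Zu Zu'].
  by move: uu'; rewrite -Zu -Zu' eqxx.
rewrite preimage_bigcup_fibres measure_fin_bigcup //; last exact: finite_finset.
rewrite [RHS]bigfs ?index_enum_uniq //; last by move=> u _; rewrite mem_index_enum.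
by congr (\big[_/_]_(_ \in _) _); apply/seteqP; split=> u /asboolP.
Qed.

Lemma equiprobable_fibres_uniform (R : realType) (P : probability Omega R) :
  (forall u u', P (Z @^-1` [set u]) = P (Z @^-1` [set u'])) ->
  forall Phi : pred U, P [set om | Phi (Z om)] = (#|Phi|%:R / #|U|%:R)%:E.
Proof.
move=> fibres_eq.
have [r fibreE] : exists r, forall u, P (Z @^-1` [set u]) = r%:E.
  exists (fine (P (Z @^-1` [set Z point]))) => u.
  by rewrite fineK ?fin_num_measure ?mZ // fibres_eq.
have probE (B : set U) : P (Z @^-1` B) = (#|[pred u | `[< B u >]]|%:R * r)%:E.
  rewrite measure_preimage_fin (eq_bigr (fun=> r%:E)) => [|u _]; last exact: fibreE.
  by rewrite (@sumEFin R _ _ _ (fun=> r)) sumr_const mulr_natl.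
have := probE setT; rewrite preimage_setT probability_setT.
rewrite (eq_card (B := U)) => [[r_normed] Phi|u]; last by rewrite !inE asboolT.
rewrite -[X in P X]/(Z @^-1` [set u | Phi u]) probE.
rewrite (eq_card (B := Phi)) => [|u]; last by rewrite !inE asboolb.
have U_neq0 : #|U|%:R != 0 :> R.
  by rewrite pnatr_eq0 -lt0n; apply/card_gt0P; exists (Z point).
by rewrite -[r](mulKf U_neq0) -r_normed mulr1.
Qed.

End finite_valued.

Lemma independent_bits_of_uniform (R : realType) d (Omega : measurableType d)
    (mu : {measure set Omega -> \bar R}) m (b : Omega -> 'I_m -> bool) :
  (forall Phi : pred {ffun 'I_m -> bool},
     mu [set om | Phi [ffun l => b om l]] = (#|Phi|%:R / (2 ^ m)%:R)%:E) ->
  forall v : 'I_m -> bool,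
    mu [set om | forall l, b om l = v l] = (\prod_(l < m) mu [set om | b om l = v l])%E.
Proof.
move=> b_unif v.
have bitE l : mu [set om | b om l = v l] = (2^-1 : R)%:E.
  rewrite (_ : [set om | _] =
      [set om | [ffun l => b om l] \in [set g : {ffun 'I_m -> bool} | g l == v l]%SET]).
    rewrite b_unif -(card_bit_fixed l (v l)) natrM invfM mulrCA mulfV ?mulr1 //.
    rewrite pnatr_eq0 -lt0n; apply/card_gt0P; exists [ffun=> v l].
    by rewrite inE ffunE.
  by apply/seteqP; split=> om; rewrite /= inE ffunE => /eqP.
rewrite (_ : [set om | _] = [set om | pred1 [ffun l => v l] [ffun l => b om l]]).
  rewrite b_unif card1 (eq_bigr (fun=> (2^-1 : R)%:E)) // prodEFin prodr_const.
  by rewrite card_ord natrX exprVn mul1r.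
apply/seteqP; split=> om /= bv; first by apply/eqP/ffunP => l; rewrite !ffunE.
by move=> l; move/eqP/ffunP: bv => /(_ l); rewrite !ffunE.
Qed.

Lemma mutually_independent_components (R : realType) d (Omega : measurableType d)
    (P : probability Omega R) (K : finType) (E : K -> set (set Omega))
    (phi : {perm K}) (Z : K -> Omega -> R) :
  mutually_independent P E ->
  (forall k A, measurable A -> E (phi k) (Z k @^-1` A)) ->
  indep_components P Z.
Proof.
move=> indep ZE A mA.
pose A' k := Z ((phi^-1)%g k) @^-1` A ((phi^-1)%g k).
have EA' k : E k (A' k) by have := ZE ((phi^-1)%g k) _ (mA ((phi^-1)%g k)); rewrite permKV.
have := indep [set: K]%SET A' (fun k _ => EA' k).
rewrite (eq_bigl _ _ (@finset.in_setT K)).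
rewrite (reindex_inj (@perm_inj _ phi)) /A'.
under eq_bigr do rewrite permK.
move=> <-; rewrite -bigcap_seq; congr (P _); apply/seteqP; split=> om /= ZA k.
  by move=> _; apply: ZA (mem_index_enum _).
by move=> _; have := ZA (phi k) (finset.in_setT _); rewrite /= permK.
Qed.

Lemma measurable_eucl_dist (R : realType) d (x : d.-tuple R) :
  measurable_fun [set: d.-tuple R] (eucl_dist x).
Proof.
apply: measurableT_comp; first exact: measurable_realfun.continuous_measurable_fun (@sqrt_continuous R).
apply: measurable_sum => k; apply: measurable_realfun.measurable_funX.
by apply: measurable_realfun.measurable_funB => //; exact: measurable_tnth.
Qed.

Section voronoi_code.
Variables (R : realType) (d w T : nat) (hw : (1 <= w)%N)
  (G : probability (d.-tuple R) R)
  (dO : measure_display) (Omega : measurableType dO) (P : probability Omega R)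
  (s : 'I_T -> 'I_(2 ^ w) -> Omega -> d.-tuple R)
  (sigma : 'I_T -> Omega -> {perm 'I_(2 ^ w)}).

Definition sample_events (k : ('I_T * 'I_(2 ^ w)) + 'I_T) : set (set Omega) :=
  match k with
  | inl (t, i) => [set s t i @^-1` A | A in [set A | measurable A]]
  | inr t => [set sigma t @^-1` B | B in [set: set {perm 'I_(2 ^ w)}]]
  end.

Hypotheses (s_meas : forall t i, measurable_fun setT (s t i))
  (s_distr : forall t i (A : set (d.-tuple R)), measurable A ->
     P (s t i @^-1` A) = G A)
  (sigma_meas : forall t (p : {perm 'I_(2 ^ w)}),
     measurable (sigma t @^-1` [set p]))
  (sigma_unif : forall t (p : {perm 'I_(2 ^ w)}),
     P (sigma t @^-1` [set p]) = ((#|{perm 'I_(2 ^ w)}|%:R)^-1)%:E)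
  (indep : mutually_independent P sample_events).
Variable x : d.-tuple R.

Local Notation n := (2 ^ w)%N.
Local Notation K := (('I_T * 'I_n) + 'I_T)%type.

(* Permutations are coded as reals, so that the distances to the sample points
   and the tie-breaking priorities together form one random vector. *)
Definition perm_code (p : {perm 'I_n}) : R := (enum_rank p : nat)%:R.

Lemma perm_code_inj : injective perm_code.
Proof. by move=> p q /eqP; rewrite eqr_nat => /eqP /val_inj /enum_rank_inj. Qed.

Definition data (k : K) (om : Omega) : R :=
  match k with
  | inl (t, i) => eucl_dist x (s t i om)
  | inr t => perm_code (sigma t om)
  end.

Definition nearest (y : rvec R K) (t : 'I_T) : {set 'I_n} :=
  [set i | [forall k, y (inl (t, i)) <= y (inl (t, k))]].

Definition priority (y : rvec R K) (t : 'I_T) : {perm 'I_n} :=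
  odflt 1%g [pick p | perm_code p == y (inr t)].

Definition chosen (y : rvec R K) (t : 'I_T) : option 'I_n :=
  prio_min (nearest y t) (priority y t).

Definition chosen_is (i : {ffun 'I_T -> 'I_n}) : set (rvec R K) :=
  [set y | forall t, chosen y t = Some (i t)].

Lemma priority_perm_code (y : rvec R K) t p : y (inr t) = perm_code p -> priority y t = p.
Proof.
move=> yp; rewrite /priority; case: pickP => [q /eqP|/(_ p)]; last by rewrite yp eqxx.
by rewrite yp => /perm_code_inj ->.
Qed.

Lemma chosen_indexE om t :
  chosen_index x (s t ^~ om) (sigma t om) =
  oapp (fun i : 'I_n => (val i).+1) 0%N (chosen (joint data om) t).
Proof. by rewrite /chosen (@priority_perm_code (joint data om) t (sigma t om)). Qed.

Lemma measurable_chosen_is i : measurable (chosen_is i).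
Proof.
pose atom (a : (K * K) + ('I_T * {perm 'I_n})) : set (rvec R K) :=
  match a with
  | inl (u, v) => [set y | y u <= y v]
  | inr (t, p) => [set y | y (inr t) = perm_code p]
  end.
apply: (measurable_of_atoms (atom := atom)).
  by case=> [[u v]|[t p]]; [exact: measurable_coord_le|exact: measurable_coord_eq].
move=> y y' yy' yi t; rewrite -(yi t) /chosen.
have -> : nearest y' t = nearest y t.
  apply/setP => j; rewrite !inE; apply: eq_forallb => k.
  by have /= yy'jk := yy' (inl (inl (t, j), inl (t, k))); apply/idP/idP => /yy'jk.
have -> // : priority y' t = priority y t.
rewrite /priority; congr odflt; apply: eq_pick => p.
by have /= yy'p := yy' (inr (t, p)); apply/eqP/eqP => /esym/yy'p/esym.
Qed.

Lemma measurable_data k : measurable_fun setT (data k).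
Proof.
case: k => [[t i]|t] /=; first exact: measurableT_comp (measurable_eucl_dist x) (s_meas t i).
by move=> _ A _; rewrite setTI; exact: (measurable_preimage_fin (sigma_meas t) (perm_code @^-1` A)).
Qed.

Lemma data_preimage_event k A : measurable A -> sample_events k (data k @^-1` A).
Proof.
case: k => [[t i]|t] mA /=; last by exists (perm_code @^-1` A).
by exists (eucl_dist x @^-1` A) => //; rewrite -[X in measurable X]setTI; exact: measurable_eucl_dist.
Qed.

Lemma data_indep : indep_components P data.
Proof.
apply: (mutually_independent_components (phi := 1%g) indep) => k A mA.
by rewrite perm1; exact: data_preimage_event.
Qed.

Section relabel.
Variable pi : 'I_T -> {perm 'I_n}.

Definition relabel_index (k : K) : K :=
  if k is inl (t, i) then inl (t, pi t i) else k.

Lemma relabel_index_inj : injective relabel_index.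
Proof. by case=> [[t i]|t] [[t' i']|t'] //= [-> /perm_inj ->]. Qed.

Definition relabeled (k : K) (om : Omega) : R :=
  if k is inr t then perm_code (pi t * sigma t om)%g else data (relabel_index k) om.

Lemma measurable_relabeled k : measurable_fun setT (relabeled k).
Proof.
case: k => [[t i]|t] /=; first exact: measurable_data.
move=> _ A _; rewrite setTI.
exact: (measurable_preimage_fin (sigma_meas t) ((fun p => perm_code (pi t * p)%g) @^-1` A)).
Qed.

Lemma relabeled_indep : indep_components P relabeled.
Proof.
apply: (mutually_independent_components (phi := perm relabel_index_inj) indep).
case=> [[t i]|t] A mA; rewrite permE /=; first exact: (data_preimage_event (inl (t, pi t i))).
by exists ((fun p => perm_code (pi t * p)%g) @^-1` A).
Qed.

(* Each sample point is distributed as G, and pi t * sigma t is uniform as sigma t is. *)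
Lemma relabeled_marginal k A : measurable A ->
  P (data k @^-1` A) = P (relabeled k @^-1` A).
Proof.
move=> mA; case: k => [[t i]|t] /=.
  have mA' : measurable (eucl_dist x @^-1` A).
    by rewrite -[X in measurable X]setTI; exact: measurable_eucl_dist.
  rewrite -[data _ @^-1` _]/(s t i @^-1` (eucl_dist x @^-1` A)).
  rewrite -[relabeled _ @^-1` _]/(s t (pi t i) @^-1` (eucl_dist x @^-1` A)).
  by rewrite !s_distr.
rewrite -[data _ @^-1` _]/(sigma t @^-1` (perm_code @^-1` A)).
rewrite -[relabeled _ @^-1` _]/(sigma t @^-1` ((fun p => perm_code (pi t * p)%g) @^-1` A)).
rewrite !(measure_preimage_fin (sigma_meas t)).
rewrite (reindex_inj (mulgI (pi t))) /=.
by apply: eq_bigr => p _; rewrite !(sigma_unif t).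
Qed.

Lemma chosen_relabeled om t :
  chosen (joint relabeled om) t = omap ((pi t)^-1)%g (chosen (joint data om) t).
Proof.
rewrite /chosen -prio_min_relabel.
rewrite (@priority_perm_code (joint relabeled om) t (pi t * sigma t om)%g) //.
rewrite (@priority_perm_code (joint data om) t (sigma t om)) //.
congr prio_min; apply/setP => j; rewrite !inE.
apply/forallP/forallP => /= jmin k; last exact: jmin.
by have := jmin ((pi t)^-1 k)%g; rewrite /joint /= permKV.
Qed.

Lemma preimage_chosen_is_relabeled (i : {ffun 'I_T -> 'I_n}) :
  joint relabeled @^-1` chosen_is i = joint data @^-1` chosen_is [ffun t => pi t (i t)].
Proof.
apply/seteqP; split=> om /= ci t; have := ci t; rewrite chosen_relabeled ?ffunE.
  by case: (chosen _ t) => //= j [<-]; rewrite permKV.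
by move=> ->; rewrite /= permK.
Qed.

End relabel.

Lemma prob_chosen_is_const (i j : {ffun 'I_T -> 'I_n}) :
  P (joint data @^-1` chosen_is i) = P (joint data @^-1` chosen_is j).
Proof.
pose pi t := tperm (i t) (j t).
rewrite (joint_law_eq measurable_data (measurable_relabeled pi) data_indep
  (relabeled_indep pi) (@relabeled_marginal pi) (measurable_chosen_is i)).
rewrite preimage_chosen_is_relabeled; congr (P (_ @^-1` chosen_is _)).
by apply/ffunP => t; rewrite ffunE tpermL.
Qed.

Lemma n_gt0 : (0 < n)%N. Proof. by rewrite expn_gt0. Qed.

Lemma chosen_data_some om t : exists i, chosen (joint data om) t = Some i.
Proof. by apply: prio_min_some; apply: card_minimizers_gt0 n_gt0. Qed.

(* The default index is never used, by chosen_data_some. *)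
Definition index_tuple (om : Omega) : {ffun 'I_T -> 'I_n} :=
  [ffun t => odflt (Ordinal n_gt0) (chosen (joint data om) t)].

Lemma index_tuple_fibre i : index_tuple @^-1` [set i] = joint data @^-1` chosen_is i.
Proof.
apply/seteqP; split=> om /= => [<- t|chosen_i]; last first.
  by apply/ffunP => t; rewrite ffunE chosen_i.
by rewrite ffunE; case: (chosen_data_some om t) => j ->.
Qed.

Lemma index_tuple_uniform (Phi : pred {ffun 'I_T -> 'I_n}) :
  P [set om | Phi (index_tuple om)] = (#|Phi|%:R / #|{ffun 'I_T -> 'I_n}|%:R)%:E.
Proof.
apply: equiprobable_fibres_uniform => [i|i j]; rewrite !index_tuple_fibre; last first.
  exact: prob_chosen_is_const.
rewrite -[X in measurable X]setTI.
exact: measurable_joint measurable_data measurableT _ (measurable_chosen_is i).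
Qed.

Lemma code_bitsE om :
  [ffun l => code_bit x (fun t i => s t i om) (fun t => sigma t om) l] =
  block_code (index_tuple om).
Proof.
apply/ffunP => l; rewrite /code_bit /block_code !ffunE; case: insub => // t.
by rewrite chosen_indexE ffunE; case: (chosen_data_some om t) => i ->.
Qed.

Lemma code_uniform (Phi : pred {ffun 'I_(T * w) -> bool}) :
  P [set om | Phi [ffun l => code_bit x (fun t i => s t i om) (fun t => sigma t om) l]] =
  (#|Phi|%:R / (2 ^ (T * w))%:R)%:E.
Proof.
have [inv codeK invK] := @block_code_bij w T hw.
rewrite (_ : [set om | _] = [set om | Phi (block_code (index_tuple om))]); last first.
  by apply/seteqP; split=> om; rewrite /= code_bitsE.
rewrite (index_tuple_uniform [pred i | Phi (block_code i)]) card_ffun !card_ord -expnM mulnC.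
congr (_%:R / _)%:E; rewrite -(fintype.card_image (can_inj codeK)).
apply: eq_card => v; apply/fintype.imageP/idP => [[i Pi ->] //|Pv].
by exists (inv v); rewrite ?inE invK.
Qed.

End voronoi_code.

Theorem theorem1 (R : realType) (d w T : nat) (hw : (1 <= w)%N) (hT : (1 <= T)%N)
    (G : probability (d.-tuple R) R)
    (dO : measure_display) (Omega : measurableType dO) (P : probability Omega R)
    (s : 'I_T -> 'I_(2 ^ w) -> Omega -> d.-tuple R)
    (sigma : 'I_T -> Omega -> {perm 'I_(2 ^ w)})
    (s_meas : forall t i, measurable_fun setT (s t i))
    (s_distr : forall t i (A : set (d.-tuple R)), measurable A ->
        P (s t i @^-1` A) = G A)
    (sigma_meas : forall t (p : {perm 'I_(2 ^ w)}),
        measurable (sigma t @^-1` [set p]))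
    (sigma_unif : forall t (p : {perm 'I_(2 ^ w)}),
        P (sigma t @^-1` [set p]) = ((#|{perm 'I_(2 ^ w)}|%:R)^-1)%:E)
    (indep : mutually_independent P
        (fun k : ('I_T * 'I_(2 ^ w)) + 'I_T =>
           match k with
           | inl (t, i) => [set s t i @^-1` A | A in [set A | measurable A]]
           | inr t => [set sigma t @^-1` B | B in [set: set {perm 'I_(2 ^ w)}]]
           end))
    (x : d.-tuple R) :
  forall v : 'I_(T * w) -> bool,
    P [set om | forall l, code_bit x (fun t i => s t i om) (fun t => sigma t om) l = v l]
    = (\prod_(l < T * w)
         P [set om | code_bit x (fun t i => s t i om) (fun t => sigma t om) l = v l])%E.
Proof.
apply: independent_bits_of_uniform => Phi.
exact (code_uniform hw s_meas s_distr sigma_meas sigma_unif indep x Phi).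
Qed.
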